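(* If $\mathcal{I},\mathcal{J}\subseteq\mathcal{B}_\Sigma$ are di-ideals, then $\mathcal{I}\star\mathcal{J}$ is a di-ideal.
   Context: Let $\mathbf{k}$ be a field of characteristic $0$ and $B=\bigoplus_{d\ge0}B_d$ a commutative graded $\mathbf{k}$-algebra with $B_0=\mathbf{k}$, generated by $B_1$, $\dim B_1<\infty$. Let $\mathcal{B}_\Sigma=\bigoplus_{n,d}\mathrm{Sym}^n(B_d)$ (the $\Sigma_n$-coinvariants of $B_d^{\otimes n}$), with product $\cdot$ given by multiplication in $\mathrm{Sym}(B_d)$ (zero between different $d$), and comultiplication $\Delta(w_1\cdots w_n)=\sum_{S\subseteq[n]}w_S\otimes w_{[n]\setminus S}$, $w_S=\prod_{i\in S}w_i$. Let $\mathcal{B}^\Sigma=\bigoplus_{n,d}(B_d^{\otimes n})^{\Sigma_n}$ with product $*:(B_d^{\otimes n})^{\Sigma_n}\otimes(B_e^{\otimes n})^{\Sigma_n}\to(B_{d+e}^{\otimes n})^{\Sigma_n}$ given by factorwise multiplication $(u_1\otimes\cdots\otimes u_n)*(v_1\otimes\cdots\otimes v_n)=u_1v_1\otimes\cdots\otimes u_nv_n$ (zero for different $n$). $\mathfrak{S}:\mathrm{Sym}^n(B_d)\to(B_d^{\otimes n})^{\Sigma_n}$, $w_1\cdots w_n\mapsto\sum_{\tau\in\Sigma_n}w_{\tau(1)}\otimes\cdots\otimes w_{\tau(n)}$, a linear isomorphism. An ideal of $\mathcal{B}_\Sigma$ is a bihomogeneous (in $(d,n)$) subspace closed under $\cdot$-multiplication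 by all elements of $\mathcal{B}_\Sigma$. An ideal $\mathcal{I}\subseteq\mathcal{B}_\Sigma$ is a di-ideal if $\mathfrak{S}(\mathcal{I})$ is an ideal with respect to $*$, i.e. $g*f\in\mathfrak{S}(\mathcal{I})$ for all $f\in\mathfrak{S}(\mathcal{I})$, $g\in\mathcal{B}^\Sigma$. The join $\mathcal{I}\star\mathcal{J}$ of ideals is defined by: $(\mathcal{I}\star\mathcal{J})_{d,n}$ is the kernel of $\mathrm{Sym}^n(B_d)\xrightarrow{\Delta}\bigoplus_{i=0}^n(\mathcal{B}_\Sigma/\mathcal{I})_{d,i}\otimes(\mathcal{B}_\Sigma/\mathcal{J})_{d,n-i}$. *)

From HB Require Import structures.
From mathcomp Require Import all_boot all_order all_algebra all_fingroup.
From mathcomp Require Import mpoly.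
Set Implicit Arguments. Unset Strict Implicit. Unset Printing Implicit Defensive.
Import GRing.Theory.
Local Open Scope ring_scope.

(* Coordinates: B_d has the basis (e d i)_{i < m d}, so
   - Sym(B_d) is the polynomial ring k[x_0..x_{m d - 1}]  ({mpoly k[m d]}),
     Sym^n(B_d) being its homogeneous part of degree n;
   - B_d^{(x)n} has basis e_{w 0} (x) ... (x) e_{w (n-1)}, w : 'I_n -> 'I_(m d),
     so a tensor is a function on such index words.                       *)

Section Defs.
Variable k : fieldType.
Variable m : nat -> nat.

Definition word (d n : nat) := {ffun 'I_n -> 'I_(m d)}.
Definition tens (d n : nat) := {ffun word d n -> k}.

Definition tact d n (s : 'S_n) (t : tens d n) : tens d n :=
  [ffun w : word d n => t [ffun i => w (s i)]].
Definition sym_tensor d n (t : tens d n) := forall s : 'S_n, tact s t = t.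
Definition symz d n (t : tens d n) : tens d n := \sum_(s : 'S_n) tact s t.

Definition mono d n (w : word d n) (S : {set 'I_n}) : {mpoly k[m d]} :=
  \prod_(i in S) 'X_(w i).
(* the quotient map B_d^{(x)n} -> Sym^n(B_d), w_1(x)...(x)w_n |-> w_1...w_n *)
Definition toSym d n (t : tens d n) : {mpoly k[m d]} :=
  \sum_(w : word d n) t w *: mono w setT.

(* graph of frakS : Sym^n(B_d) -> (B_d^{(x)n})^{Sigma_n},
   frakS (w_1...w_n) = sum_tau w_tau(1) (x) ... (x) w_tau(n), extended linearly *)
Definition frakS d n (f : {mpoly k[m d]}) (t : tens d n) :=
  exists t0 : tens d n, toSym t0 = f /\ symz t0 = t.

(* bihomogeneous subsets of B_Sigma: the (d,n)-component is a subset of Sym^n(B_d) *)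
Definition bset := forall d : nat, nat -> {mpoly k[m d]} -> Prop.

Definition is_ideal (I : bset) := forall d n,
  [/\ forall f, I d n f -> f \is n.-homog,
      I d n 0,
      forall (a : k) f g, I d n f -> I d n g -> I d n (a *: f + g)
    & forall p f g, I d n f -> g \is p.-homog -> I d (p + n)%N (g * f)].

Definition SImage (I : bset) d n (t : tens d n) :=
  exists f, I d n f /\ frakS f t.

(* structure constants of B:  e d i * e d' j = sum_l c d d' i j l *: e (d+d') l *)
Variable c : forall d d', 'I_(m d) -> 'I_(m d') -> 'I_(m (d + d')%N) -> k.

(* factorwise product * on tensors *)
Definition star d e n (u : tens d n) (v : tens e n) : tens (d + e)%N n :=
  [ffun w : word (d + e)%N n =>
     \sum_(a : word d n) \sum_(b : word e n)
        u a * v b * \prod_(i < n) c (a i) (b i) (w i)].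

Definition is_diideal (I : bset) :=
  is_ideal I /\
  forall d e n (f : tens d n) (g : tens e n),
    SImage I f -> sym_tensor g -> SImage I (star g f).

(* Tensor product Sym^i(B_d) (x) Sym^j(B_d), and its quotient
   (B_Sigma/I)_{d,i} (x) (B_Sigma/J)_{d,j}: an element sum_r p_r (x) q_r maps to 0
   in the quotient iff every bilinear form beta vanishing on I_{d,i} x Sym and on
   Sym x J_{d,j} satisfies sum_r beta p_r q_r = 0. *)
Definition bilinear_form d (beta : {mpoly k[m d]} -> {mpoly k[m d]} -> k) :=
  (forall (a : k) p p' q, beta (a *: p + p') q = a * beta p q + beta p' q) /\
  (forall (a : k) p q q', beta p (a *: q + q') = a * beta p q + beta p q').

(* beta applied to the (i, n-i)-component of Delta(toSym t),
   Delta(w_1...w_n) = sum_{S subset [n]} w_S (x) w_{[n]\S} *)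
Definition coprod_eval d n (t : tens d n) (i : nat)
    (beta : {mpoly k[m d]} -> {mpoly k[m d]} -> k) : k :=
  \sum_(w : word d n) t w *
    \sum_(S : {set 'I_n} | #|S| == i) beta (mono w S) (mono w (~: S)).

(* the join I * J: kernel of Sym^n(B_d) -> (+)_i (B/I)_{d,i} (x) (B/J)_{d,n-i} *)
Definition join (I J : bset) : bset := fun d n f =>
  f \is n.-homog /\
  forall t : tens d n, toSym t = f ->
  forall i, (i <= n)%N ->
  forall beta, bilinear_form beta ->
    (forall p q, I d i p -> beta p q = 0) ->
    (forall p q, J d (n - i)%N q -> beta p q = 0) ->
    coprod_eval t i beta = 0.

End Defs.

From HB Require Import structures.
From mathcomp Require Import all_boot all_order all_algebra all_fingroup.
From mathcomp Require Import mpoly.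
From mathcomp Require Import zify ring.
Set Implicit Arguments. Unset Strict Implicit. Unset Printing Implicit Defensive.
Import GRing.Theory.
Local Open Scope ring_scope.

(* In characteristic 0 every homogeneous [x] in Sym^n(B_d) has a canonical
   symmetric lift to B_d^{(x)n}, and the coproduct pairing of a tensor [t] with
   a bilinear form only depends on the image of [t] in Sym(B_d); this makes
   the join an ideal.  For the di-ideal property, let [g] be symmetric and
   [f = frakS F] with [F] in the join.  Against a form [beta] killing
   [I_{d+e,i}] and [J_{d+e,n-i}], the (i, n-i) coproduct component of [g * f]
   equals that of [F] against the pullback of [beta] along
   [x (x) y |-> g * (x (x) y)].
   Since [I] and [J] are di-ideals, [g * frakS(x)] lies in [frakS(I)] for [x] in
   [I], so the pullback kills [I_{d,i}] and [J_{d,n-i}], and the join condition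
   on [F] applies. *)

Lemma count_enum_card (T : finType) (p : pred T) : count p (enum T) = #|p|.
Proof. by rewrite cardE enumT /enum_mem size_filter. Qed.

Lemma card_fibres_perm (T : eqType) n (f g : 'I_n -> T) :
  (forall x, #|[pred i | f i == x]| = #|[pred i | g i == x]|) ->
  exists s : 'S_n, forall i, g i = f (s i).
Proof.
move=> eq_fibres.
have : perm_eq [tuple g i | i < n] [tuple f i | i < n].
  apply/allP => x _ /=; rewrite !count_map -enumT !count_enum_card.
  by apply/eqP; rewrite -(eq_fibres x); apply: eq_card.
case/tuple_permP => s eq_tuples; exists s => i.
by have := congr1 (fun t => nth (g i) t i) eq_tuples; rewrite -!tnth_nth !tnth_mktuple.
Qed.

Lemma imsetC_perm n (s : 'S_n) (S : {set 'I_n}) : ~: (s @: S) = s @: (~: S).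
Proof.
apply/setP => x; rewrite -[x](permKV s) inE !mem_imset ?inE //; exact: perm_inj.
Qed.

Lemma imset_permK n (s : 'S_n) (S : {set 'I_n}) : s @: ((s^-1)%g @: S) = S.
Proof. by rewrite -imset_comp (eq_imset _ (permKV s)) imset_id. Qed.

Section Words.
Variable k : fieldType.
Variable m : nat -> nat.

Definition wdeg d n (w : word m d n) : 'X_{1..m d} := (\sum_(i < n) U_(w i))%MM.

Definition wact d n (s : 'S_n) (w : word m d n) : word m d n := [ffun i => w (s i)].

Lemma wact1 d n (w : word m d n) : wact 1 w = w.
Proof. by apply/ffunP => i; rewrite ffunE perm1. Qed.

Lemma monoE d n (w : word m d n) (S : {set 'I_n}) :
  mono k w S = 'X_[\sum_(i in S) U_(w i)].
Proof. by rewrite /mono (big_morph (@mpolyX _ k) (@mpolyXD _ k) (@mpolyX0 _ k)). Qed.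

Lemma mono_setT d n (w : word m d n) : mono k w setT = 'X_[wdeg w].
Proof. by rewrite monoE /wdeg; congr mpolyX; apply: eq_bigl => i; rewrite in_setT. Qed.

Lemma mono_set0 d n (w : word m d n) : mono k w set0 = 1.
Proof. by rewrite /mono big_set0. Qed.

Lemma mono_homog d n (w : word m d n) (S : {set 'I_n}) : mono k w S \is #|S|.-homog.
Proof.
have deg_S : mdeg (\sum_(i in S) U_(w i))%MM = #|S|.
  by rewrite mdeg_sum -sum1_card; apply: eq_bigr => i _; apply: mdeg1.
by rewrite monoE dhomogX; apply/eqP; exact: deg_S.
Qed.

Lemma mono_wact d n s (w : word m d n) (S : {set 'I_n}) :
  mono k (wact s w) S = mono k w (s @: S).
Proof.
rewrite /mono big_imset /=; last by move=> x y _ _; apply: perm_inj.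
by apply: eq_bigr => i _; rewrite ffunE.
Qed.

Lemma mdeg_wdeg d n (w : word m d n) : mdeg (wdeg w) = n.
Proof.
rewrite /wdeg mdeg_sum -[n in RHS]card_ord -sum1_card.
by apply: eq_bigr => i _; apply: mdeg1.
Qed.

Lemma wdegE d n (w : word m d n) j : wdeg w j = #|[pred i | w i == j]|.
Proof.
rewrite /wdeg mnm_sumE -sum1_card [RHS]big_mkcond /=; apply: eq_bigr => i _.
by rewrite mnm1E inE; case: eqP.
Qed.

Lemma wdeg_wact d n s (w : word m d n) : wdeg (wact s w) = wdeg w.
Proof.
rewrite /wdeg [RHS](reindex_inj (@perm_inj _ s)); apply: eq_bigr => i _.
by rewrite ffunE.
Qed.

Lemma wdeg_eqP d n (w w' : word m d n) :
  wdeg w = wdeg w' <-> exists s : 'S_n, w' = wact s w.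
Proof.
split=> [eq_deg|[s ->]]; last by rewrite wdeg_wact.
have [s w's] : exists s : 'S_n, forall i, w' i = w (s i).
  by apply: card_fibres_perm => x; rewrite -!wdegE eq_deg.
by exists s; apply/ffunP => i; rewrite ffunE.
Qed.

Lemma wdeg_surj d n (nu : 'X_{1..m d}) :
  mdeg nu = n -> exists w : word m d n, wdeg w = nu.
Proof.
move=> deg_nu.
pose s := flatten [seq nseq (nu j) j | j <- enum 'I_(m d)].
have size_s : size s = n.
  rewrite size_flatten /shape -map_comp sumnE big_map big_enum /= -deg_nu mdegE.
  by apply: eq_bigr => j _; rewrite /= size_nseq.
have count_s j : count_mem j s = nu j.
  rewrite count_flatten -map_comp sumnE big_map big_enum /= (bigD1 j) //= big1.
    by rewrite count_nseq /= eqxx mul1n addn0.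
  by move=> j' /negbTE neq_j; rewrite /= count_nseq /= neq_j.
case: n deg_nu size_s => [|n] deg_nu size_s.
  have -> : nu = 0%MM by apply/eqP; rewrite -mdeg_eq0 deg_nu.
  by exists (ffun0 (card_ord 0)); rewrite /wdeg big_ord0.
have x0 : 'I_(m d) by move: size_s; case: (s) => [//|x0 _ _]; exact: x0.
exists [ffun i : 'I_n.+1 => nth x0 s i]; apply/mnmP => j.
have enum_s : [seq nth x0 s (val i) | i <- enum 'I_n.+1] = s.
  by rewrite -{2}(mkseq_nth x0 s) size_s /mkseq -val_enum_ord -map_comp.
rewrite wdegE -count_s -[in RHS]enum_s count_map -count_enum_card.
by apply: eq_count => i; rewrite /= ffunE.
Qed.

Lemma toSymE d n (t : tens k m d n) : toSym t = \sum_w t w *: 'X_[wdeg w].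
Proof. by apply: eq_bigr => w _; rewrite mono_setT. Qed.

Lemma toSym_homog d n (t : tens k m d n) : toSym t \is n.-homog.
Proof.
by rewrite toSymE; apply: rpred_sum => w _; rewrite rpredZ // dhomogX; apply/eqP; exact: mdeg_wdeg.
Qed.

End Words.

Section SymmetricLift.
Variable k : fieldType.
Hypothesis hchar : [pchar k] =i pred0.
Variable m : nat -> nat.

Definition wclass_size d n (w : word m d n) : nat :=
  #|[pred w' : word m d n | wdeg w' == wdeg w]|.

Lemma wclass_size_eq d n (w w' : word m d n) :
  wdeg w = wdeg w' -> wclass_size w = wclass_size w'.
Proof. by move=> eq_deg; apply: eq_card => u; rewrite !inE eq_deg. Qed.

Lemma natr_neq0 (q : nat) : (0 < q)%N -> q%:R != 0 :> k.
Proof. by move=> q_gt0; rewrite (proj1 (pcharf0P k) hchar) -lt0n. Qed.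

Lemma wclass_size_neq0 d n (w : word m d n) : (wclass_size w)%:R != 0 :> k.
Proof. by apply/natr_neq0/card_gt0P; exists w; rewrite inE. Qed.

(* The symmetric tensor lifting [x], spreading each coefficient of [x] evenly
   over the Sigma_n-orbit of words with the corresponding exponent. *)
Definition sym_lift d n (x : {mpoly k[m d]}) : tens k m d n :=
  [ffun w => x@_(wdeg w) / (wclass_size w)%:R].

Lemma sym_liftE d n (x : {mpoly k[m d]}) w :
  sym_lift n x w = x@_(wdeg w) / (wclass_size w)%:R.
Proof. by rewrite ffunE. Qed.

Lemma sym_liftD d n (a : k) (x y : {mpoly k[m d]}) w :
  sym_lift n (a *: x + y) w = a * sym_lift n x w + sym_lift n y w.
Proof. by rewrite !ffunE mcoeffD mcoeffZ mulrDl mulrA. Qed.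

Lemma sym_lift_wact d n (x : {mpoly k[m d]}) s w :
  sym_lift n x (wact s w) = sym_lift n x w.
Proof. by rewrite !sym_liftE wdeg_wact (wclass_size_eq (wdeg_wact s w)). Qed.

Definition wdeg_invariant d n (P : word m d n -> k) :=
  forall w w', wdeg w = wdeg w' -> P w = P w'.

Lemma sum_sym_liftX d n (P : word m d n -> k) (b : word m d n) :
  wdeg_invariant P -> \sum_u sym_lift n 'X_[wdeg b] u * P u = P b.
Proof.
move=> P_inv; rewrite (bigID (fun u => wdeg u == wdeg b)) /= [X in _ + X]big1; last first.
  by move=> u /negbTE neq_u; rewrite sym_liftE mcoeffX eq_sym neq_u !mul0r.
rewrite addr0 (eq_bigr (fun _ => P b / (wclass_size b)%:R)); last first.
  move=> u /eqP eq_u; rewrite sym_liftE mcoeffX eq_u eqxx (wclass_size_eq eq_u).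
  by rewrite (P_inv _ _ eq_u) mul1r mulrC.
rewrite sumr_const -mulrnAr -[_^-1 *+ _]mulr_natr mulVf ?mulr1 //.
exact: wclass_size_neq0.
Qed.

Lemma sum_sym_lift_toSym d n (t : tens k m d n) (P : word m d n -> k) :
  wdeg_invariant P -> \sum_w t w * P w = \sum_u sym_lift n (toSym t) u * P u.
Proof.
move=> P_inv.
have lift_toSym u : sym_lift n (toSym t) u = \sum_w t w * sym_lift n 'X_[wdeg w] u.
  rewrite sym_liftE toSymE raddf_sum mulr_suml; apply: eq_bigr => w _.
  change ((t w *: 'X_[wdeg w])@_(wdeg u) / (wclass_size u)%:R
          = t w * sym_lift n 'X_[wdeg w] u).
  by rewrite mcoeffZ sym_liftE mulrA.
under [RHS]eq_bigr do rewrite lift_toSym mulr_suml.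
rewrite exchange_big /=; apply: eq_bigr => w _.
by under eq_bigr do rewrite -mulrA; rewrite -mulr_sumr sum_sym_liftX.
Qed.

Lemma toSym_sym_lift d n (x : {mpoly k[m d]}) :
  x \is n.-homog -> toSym (sym_lift n x) = x.
Proof.
move=> x_homog; apply/mpolyP => nu; rewrite toSymE raddf_sum /=.
under eq_bigr do rewrite mcoeffZ mcoeffX.
have [deg_nu|/negbTE nu_out] := boolP (mdeg nu == n).
  have [w0 <-] := wdeg_surj (eqP deg_nu).
  rewrite -[RHS](sum_sym_liftX (P := fun _ : word m d n => x@_(wdeg w0)) w0) //.
  apply: eq_bigr => w _; rewrite !sym_liftE mcoeffX eq_sym.
  have [eq_w|] := eqVneq; last by rewrite mulr0 !mul0r.
  by rewrite eq_w -(wclass_size_eq eq_w) mulr1 mul1r mulrC.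
rewrite big1 => [|w _]; last first.
  case: eqP => [eq_w|_]; last by rewrite mulr0.
  by rewrite -eq_w mdeg_wdeg eqxx in nu_out.
apply/esym/eqP; rewrite mcoeff_eq0; apply/negP => nu_supp.
by rewrite (dhomog_mf x_homog nu_supp) eqxx in nu_out.
Qed.

End SymmetricLift.

Section Coproduct.
Variable k : fieldType.
Hypothesis hchar : [pchar k] =i pred0.
Variable m : nat -> nat.

Definition coprod_term d n i (beta : {mpoly k[m d]} -> {mpoly k[m d]} -> k)
    (w : word m d n) :=
  \sum_(S : {set 'I_n} | #|S| == i) beta (mono k w S) (mono k w (~: S)).

Lemma coprod_term_invariant d n i beta : wdeg_invariant (@coprod_term d n i beta).
Proof.
move=> w w' /wdeg_eqP [s ->]; rewrite /coprod_term.
rewrite [RHS](reindex_inj (imset_inj (@perm_inj _ (s^-1)%g))) /=.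
apply: eq_big => S; first by rewrite card_imset //; apply: perm_inj.
by move=> _; rewrite imsetC_perm !mono_wact !imset_permK.
Qed.

Lemma coprod_eval_sym_lift d n (t : tens k m d n) i beta :
  coprod_eval t i beta = \sum_u sym_lift n (toSym t) u * coprod_term i beta u.
Proof. exact: (sum_sym_lift_toSym hchar t (@coprod_term_invariant d n i beta)). Qed.

Lemma coprod_eval_toSym d n (t t' : tens k m d n) i beta :
  toSym t = toSym t' -> coprod_eval t i beta = coprod_eval t' i beta.
Proof. by move=> eq_t; rewrite !coprod_eval_sym_lift eq_t. Qed.

Lemma coprod_eval_gt d n (t : tens k m d n) i beta :
  (n < i)%N -> coprod_eval t i beta = 0.
Proof.
move=> n_lt_i; apply: big1 => w _; rewrite big_pred0 ?mulr0 // => S.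
apply/negbTE; rewrite neq_ltn (leq_ltn_trans _ n_lt_i) //.
by rewrite -[n in (_ <= n)%N]card_ord max_card.
Qed.

End Coproduct.

Section TensorAction.
Variable k : fieldType.
Variable m : nat -> nat.
Variable c : forall d d' : nat, 'I_(m d) -> 'I_(m d') -> 'I_(m (d + d')%N) -> k.

Lemma wact_inj d n (s : 'S_n) : injective (@wact m d n s).
Proof.
by apply: (can_inj (g := wact (s^-1)%g)) => w; apply/ffunP => i; rewrite !ffunE permKV.
Qed.

Lemma sum_wact (R : nmodType) d n (s : 'S_n) (F : word m d n -> R) :
  \sum_w F w = \sum_w F (wact s w).
Proof. exact: (reindex_inj (@wact_inj d n s)). Qed.

Lemma tactE d n s (t : tens k m d n) w : tact s t w = t (wact s w).
Proof. by rewrite ffunE. Qed.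

Lemma symzE d n (t : tens k m d n) w : symz t w = \sum_(s : 'S_n) t (wact s w).
Proof. by rewrite /symz sum_ffunE; apply: eq_bigr => s _; rewrite tactE. Qed.

Lemma sym_tensor_wact d n (t : tens k m d n) :
  sym_tensor t -> forall s w, t (wact s w) = t w.
Proof. by move=> t_sym s w; rewrite -tactE t_sym. Qed.

Lemma toSym_tact d n s (t : tens k m d n) : toSym (tact s t) = toSym t.
Proof.
by rewrite !toSymE [RHS](sum_wact s); apply: eq_bigr => w _; rewrite tactE wdeg_wact.
Qed.

Lemma toSym_symz d n (t : tens k m d n) : toSym (symz t) = n`!%:R *: toSym t.
Proof.
rewrite {1}toSymE; under eq_bigr do rewrite symzE scaler_suml.
rewrite exchange_big /= (eq_bigr (fun _ => toSym t)); last first.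
  by move=> s _; rewrite -(toSym_tact s) toSymE; apply: eq_bigr => w _; rewrite tactE.
by rewrite sumr_const card_Sn scaler_nat.
Qed.

Lemma toSymZ d n a (t : tens k m d n) : toSym [ffun w => a * t w] = a *: toSym t.
Proof. by rewrite !toSymE scaler_sumr; apply: eq_bigr => w _; rewrite ffunE scalerA. Qed.

Definition star_coef d e n (a : word m e n) (b : word m d n) (w : word m (e + d) n) :=
  \prod_i c (a i) (b i) (w i).

Lemma starE d e n (g : tens k m e n) (t : tens k m d n) w :
  star c g t w = \sum_a \sum_b g a * t b * star_coef a b w.
Proof. by rewrite ffunE. Qed.

Lemma star_coef_wact d e n s (a : word m e n) (b : word m d n) w :
  star_coef (wact s a) (wact s b) (wact s w) = star_coef a b w.
Proof.
rewrite /star_coef [RHS](reindex_inj (@perm_inj _ s)).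
by apply: eq_bigr => i _; rewrite !ffunE.
Qed.

Lemma star_wact d e n s (g : tens k m e n) (t : tens k m d n) w :
  sym_tensor g -> star c g t (wact s w) = star c g (tact s t) w.
Proof.
move=> g_sym; rewrite !starE (sum_wact s); apply: eq_bigr => a _.
rewrite (sum_wact s); apply: eq_bigr => b _.
by rewrite star_coef_wact (sym_tensor_wact g_sym) tactE.
Qed.

Lemma symz_star d e n (g : tens k m e n) (t : tens k m d n) :
  sym_tensor g -> symz (star c g t) = star c g (symz t).
Proof.
move=> g_sym; apply/ffunP => w; rewrite symzE.
under eq_bigr do rewrite star_wact // starE.
rewrite starE exchange_big; apply: eq_bigr => a _.
rewrite exchange_big; apply: eq_bigr => b _.
by rewrite symzE -!mulr_suml -mulr_sumr; under eq_bigr do rewrite tactE.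
Qed.

End TensorAction.

Section BilinearForms.
Variable k : fieldType.
Variable m : nat -> nat.
Variable d : nat.
Variable beta : {mpoly k[m d]} -> {mpoly k[m d]} -> k.
Hypothesis beta_bil : bilinear_form beta.

Lemma bilinear_form0l q : beta 0 q = 0.
Proof.
have := beta_bil.1 1 0 0 q; rewrite scale1r addr0 mul1r.
by move/(congr1 (fun z => z - beta 0 q)); rewrite subrr addrK.
Qed.

Lemma bilinear_form0r p : beta p 0 = 0.
Proof.
have := beta_bil.2 1 p 0 0; rewrite scale1r addr0 mul1r.
by move/(congr1 (fun z => z - beta p 0)); rewrite subrr addrK.
Qed.

Lemma bilinear_form_suml (I : finType) (P : pred I) (a : I -> k) x q :
  beta (\sum_(i | P i) a i *: x i) q = \sum_(i | P i) a i * beta (x i) q.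
Proof.
apply: (big_rec2 (fun u v => beta v q = u)); first exact: bilinear_form0l.
by move=> i y z _ <-; rewrite beta_bil.1.
Qed.

Lemma bilinear_form_sumr (I : finType) (P : pred I) (a : I -> k) x p :
  beta p (\sum_(i | P i) a i *: x i) = \sum_(i | P i) a i * beta p (x i).
Proof.
apply: (big_rec2 (fun u v => beta p v = u)); first exact: bilinear_form0r.
by move=> i y z _ <-; rewrite beta_bil.2.
Qed.

Definition mulform (a b : {mpoly k[m d]}) := fun x y => beta (a * x) (b * y).

Lemma mulform_bilinear a b : bilinear_form (mulform a b).
Proof. by split => r x x' y; rewrite /mulform mulrDr -scalerAr ?beta_bil.1 ?beta_bil.2. Qed.

End BilinearForms.

Section DiidealStar.
Variable k : fieldType.
Hypothesis hchar : [pchar k] =i pred0.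
Variable m : nat -> nat.
Variable c : forall d d' : nat, 'I_(m d) -> 'I_(m d') -> 'I_(m (d + d')%N) -> k.

Lemma idealZ (I : bset k m) d n a f : is_ideal I -> I d n f -> I d n (a *: f).
Proof.
move=> I_ideal f_in; have [_ I0 ID _] := I_ideal d n.
by have := ID a f 0 f_in I0; rewrite addr0.
Qed.

Lemma SImage_sym_lift (I : bset k m) d n (x : {mpoly k[m d]}) :
  is_ideal I -> I d n x -> SImage I (sym_lift n x).
Proof.
move=> I_ideal x_in; have [I_homog _ _ _] := I_ideal d n.
have fact_neq0 : n`!%:R != 0 :> k by apply/natr_neq0/fact_gt0.
exists ((n`!%:R)^-1 *: x); split; first exact: idealZ.
exists [ffun w => (n`!%:R)^-1 * sym_lift n x w]; split.
  by rewrite toSymZ toSym_sym_lift // I_homog.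
apply/ffunP => w; rewrite symzE.
under eq_bigr do rewrite ffunE sym_lift_wact.
by rewrite sumr_const card_Sn -mulrnAl -[_^-1 *+ _]mulr_natr mulVf ?mul1r.
Qed.

Lemma diideal_toSym_star (I : bset k m) d e n (x : {mpoly k[m d]}) (g : tens k m e n) :
  is_diideal c I -> I d n x -> sym_tensor g ->
  I (e + d)%N n (toSym (star c g (sym_lift n x))).
Proof.
move=> [I_ideal I_star] x_in g_sym.
have [F [F_in [t [toSym_t symz_t]]]] :=
  I_star _ _ _ _ _ (SImage_sym_lift I_ideal x_in) g_sym.
by rewrite -symz_t toSym_symz toSym_t; apply: idealZ.
Qed.

End DiidealStar.

Section Concatenation.
Variable T : Type.
Variables p n : nat.

Definition fcat (u : {ffun 'I_p -> T}) (v : {ffun 'I_n -> T}) : {ffun 'I_(p + n) -> T} :=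
  [ffun x => match split x with inl a => u a | inr b => v b end].
Definition fcatl (w : {ffun 'I_(p + n) -> T}) : {ffun 'I_p -> T} := [ffun a => w (lshift n a)].
Definition fcatr (w : {ffun 'I_(p + n) -> T}) : {ffun 'I_n -> T} := [ffun b => w (rshift p b)].

Lemma fcat_lshift u v a : fcat u v (lshift n a) = u a.
Proof. by rewrite ffunE (unsplitK (inl a)). Qed.
Lemma fcat_rshift u v b : fcat u v (rshift p b) = v b.
Proof. by rewrite ffunE (unsplitK (inr b)). Qed.

Lemma fcatK w : fcat (fcatl w) (fcatr w) = w.
Proof.
apply/ffunP => x; rewrite ffunE; move: (splitK x).
by case: (split x) => [a|b] /= <-; rewrite ffunE.
Qed.

Lemma fcatlK u v : fcatl (fcat u v) = u.
Proof. by apply/ffunP => a; rewrite ffunE fcat_lshift. Qed.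
Lemma fcatrK u v : fcatr (fcat u v) = v.
Proof. by apply/ffunP => b; rewrite ffunE fcat_rshift. Qed.

Definition scat (S1 : {set 'I_p}) (S2 : {set 'I_n}) : {set 'I_(p + n)} :=
  [set x | match split x with inl a => a \in S1 | inr b => b \in S2 end].

Lemma scat_lshift S1 S2 a : (lshift n a \in scat S1 S2) = (a \in S1).
Proof. by rewrite inE (unsplitK (inl a)). Qed.
Lemma scat_rshift S1 S2 b : (rshift p b \in scat S1 S2) = (b \in S2).
Proof. by rewrite inE (unsplitK (inr b)). Qed.

Lemma setC_scat S1 S2 : ~: scat S1 S2 = scat (~: S1) (~: S2).
Proof. by apply/setP => x; rewrite !inE; case: (split x) => [a|b]; rewrite inE. Qed.

Lemma card_scat S1 S2 : #|scat S1 S2| = (#|S1| + #|S2|)%N.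
Proof.
rewrite -!sum1_card big_split_ord /=.
by congr addn; apply: eq_bigl => x; rewrite ?scat_lshift ?scat_rshift.
Qed.

Variable R : nmodType.

Lemma sum_scat (F : {set 'I_(p + n)} -> R) :
  \sum_S F S = \sum_S1 \sum_S2 F (scat S1 S2).
Proof.
rewrite pair_big /= (reindex (fun S => scat S.1 S.2)) //.
exists (fun S : {set 'I_(p + n)} => ([set a | lshift n a \in S], [set b | rshift p b \in S])).
  by move=> [S1 S2] _ /=; congr pair; apply/setP => x; rewrite inE ?scat_lshift ?scat_rshift.
move=> S _ /=; apply/setP => x; rewrite inE; move: (splitK x).
by case: (split x) => [a|b] /= <-; rewrite inE.
Qed.

End Concatenation.

Lemma sum_fcat (R : nmodType) (T : finType) p n (F : {ffun 'I_(p + n) -> T} -> R) :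
  \sum_w F w = \sum_u \sum_v F (fcat u v).
Proof.
rewrite pair_big /= (reindex (fun uv => fcat uv.1 uv.2)) //.
exists (fun w => (fcatl w, fcatr w)) => [[u v] _|w _] /=; last exact: fcatK.
by rewrite fcatlK fcatrK.
Qed.

Section ConcatenatedWords.
Variable k : fieldType.
Variable m : nat -> nat.
Variable c : forall d d' : nat, 'I_(m d) -> 'I_(m d') -> 'I_(m (d + d')%N) -> k.
Variables d p n : nat.

Lemma mono_fcat (u : word m d p) (v : word m d n) S1 S2 :
  mono k (fcat u v : word m d (p + n)) (scat S1 S2) = mono k u S1 * mono k v S2.
Proof.
rewrite /mono big_split_ord /=.
by congr (_ * _); apply: eq_big => x;
  rewrite ?scat_lshift ?scat_rshift ?fcat_lshift ?fcat_rshift.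
Qed.

Lemma wdeg_fcat (u : word m d p) (v : word m d n) :
  wdeg (fcat u v : word m d (p + n)) = (wdeg u + wdeg v)%MM.
Proof.
by rewrite /wdeg big_split_ord /=; congr (_ + _)%MM; apply: eq_bigr => x _;
  rewrite ?fcat_lshift ?fcat_rshift.
Qed.

Lemma star_coef_fcat e (a1 : word m e p) (a2 : word m e n) (b1 : word m d p)
    (b2 : word m d n) (w1 : word m (e + d) p) (w2 : word m (e + d) n) :
  star_coef c (fcat a1 a2 : word m e (p + n)) (fcat b1 b2 : word m d (p + n))
    (fcat w1 w2 : word m (e + d) (p + n)) = star_coef c a1 b1 w1 * star_coef c a2 b2 w2.
Proof.
by rewrite /star_coef big_split_ord /=; congr (_ * _); apply: eq_bigr => x _;
  rewrite ?fcat_lshift ?fcat_rshift.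
Qed.

Definition tprod (u : tens k m d p) (v : tens k m d n) : tens k m d (p + n) :=
  [ffun w => u (fcatl w) * v (fcatr w)].

Lemma toSym_tprod u v : toSym (tprod u v) = toSym u * toSym v.
Proof.
rewrite !toSymE sum_fcat mulr_suml; apply: eq_bigr => a _.
rewrite mulr_sumr; apply: eq_bigr => b _.
by rewrite ffunE fcatlK fcatrK -scalerAl -scalerAr scalerA -mpolyXD wdeg_fcat.
Qed.

Lemma coprod_eval_tprod u v i beta :
  coprod_eval (tprod u v) i beta =
  \sum_a u a * \sum_(S1 : {set 'I_p} | (#|S1| <= i)%N)
     coprod_eval v (i - #|S1|) (mulform beta (mono k a S1) (mono k a (~: S1))).
Proof.
rewrite /coprod_eval sum_fcat; apply: eq_bigr => a _.
under eq_bigr do rewrite ffunE fcatlK fcatrK big_mkcond sum_scat -mulrA.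
rewrite -mulr_sumr; congr (_ * _).
rewrite exchange_big /=; apply: eq_bigr => b _.
rewrite -mulr_sumr; congr (_ * _); rewrite [RHS]big_mkcond; apply: eq_bigr => S1 _.
case: leqP => [le_S1_i|lt_i_S1]; last first.
  by rewrite big1 // => S2 _; rewrite card_scat gtn_eqF // ltn_addr.
rewrite [RHS]big_mkcond; apply: eq_bigr => S2 _.
by rewrite card_scat setC_scat !mono_fcat -(eqn_add2l #|S1| #|S2|) subnKC.
Qed.

End ConcatenatedWords.

Section JoinIdeal.
Variable k : fieldType.
Hypothesis hchar : [pchar k] =i pred0.
Variable m : nat -> nat.
Implicit Types I J : bset k m.

Lemma join_coprod_term I J d n (f : {mpoly k[m d]}) i beta :
  join I J n f -> (i <= n)%N -> bilinear_form beta ->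
  (forall p q, I d i p -> beta p q = 0) -> (forall p q, J d (n - i)%N q -> beta p q = 0) ->
  \sum_u sym_lift n f u * coprod_term i beta u = 0.
Proof.
move=> [f_homog f_join] le_i_n beta_bil beta_I beta_J.
have toSym_f := toSym_sym_lift hchar f_homog.
have := f_join _ toSym_f i le_i_n beta beta_bil beta_I beta_J.
by rewrite (coprod_eval_sym_lift hchar) toSym_f.
Qed.

Lemma join0 I J d n : join I J n (0 : {mpoly k[m d]}).
Proof.
split=> [|t toSym_t i _ beta _ _ _]; first exact: rpred0.
rewrite (coprod_eval_sym_lift hchar) toSym_t big1 // => u _.
by rewrite sym_liftE mcoeff0 !mul0r.
Qed.

Lemma joinD I J d n a (f g : {mpoly k[m d]}) :
  join I J n f -> join I J n g -> join I J n (a *: f + g).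
Proof.
move=> f_join g_join; split.
  by rewrite rpredD ?rpredZ //; [apply: f_join.1 | apply: g_join.1].
move=> t toSym_t i le_i_n beta beta_bil beta_I beta_J.
rewrite (coprod_eval_sym_lift hchar) toSym_t.
under eq_bigr do rewrite sym_liftD mulrDl -mulrA.
rewrite big_split /= -mulr_sumr !(join_coprod_term _ le_i_n beta_bil beta_I beta_J) //.
by rewrite mulr0 addr0.
Qed.

(* The (i, p+n-i) component of [Delta(g f)] splits as a sum over the
   (|S1|, p-|S1|) components of [Delta g], each paired against a component of
   [Delta f] by a form to which the join condition on [f] applies. *)
Lemma join_mull I J d n p (f g : {mpoly k[m d]}) : is_ideal I -> is_ideal J ->
  join I J n f -> g \is p.-homog -> join I J (p + n)%N (g * f).
Proof.
move=> I_ideal J_ideal [f_homog f_join] g_homog; split; first exact: dhomogM.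
move=> t toSym_t i le_i_pn beta beta_bil beta_I beta_J.
have toSym_gf : toSym (tprod (sym_lift p g) (sym_lift n f)) = g * f.
  by rewrite toSym_tprod !toSym_sym_lift.
rewrite (coprod_eval_toSym hchar i beta (etrans toSym_t (esym toSym_gf))).
rewrite coprod_eval_tprod big1 // => a _.
rewrite big1 ?mulr0 // => S1 le_S1_i; set i' := (i - #|S1|)%N.
have [lt_n_i'|le_i'_n] := ltnP n i'; first exact: coprod_eval_gt.
have card_S1C : #|~: S1| = (p - #|S1|)%N by rewrite cardsCs setCK card_ord.
apply: (f_join _ (toSym_sym_lift hchar f_homog) i' le_i'_n).
- exact: mulform_bilinear.
- move=> x y x_in; apply: beta_I; have [_ _ _ I_mul] := I_ideal d i'.
  by have := I_mul _ _ _ x_in (mono_homog k a S1); rewrite subnKC.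
- move=> x y y_in; apply: beta_J; have [_ _ _ J_mul] := J_ideal d (n - i')%N.
  have := J_mul _ _ _ y_in (mono_homog k a (~: S1)).
  have -> // : (#|~: S1| + (n - i') = p + n - i)%N.
  by rewrite card_S1C /i'; have := max_card S1; rewrite card_ord; lia.
Qed.

Lemma join_is_ideal I J : is_ideal I -> is_ideal J -> is_ideal (join I J).
Proof.
move=> I_ideal J_ideal d n; split; [by move=> f [] | exact: join0 | exact: joinD |].
by move=> p f g; apply: join_mull.
Qed.

End JoinIdeal.

Section Reorder5.
Variable R : nmodType.
Variables A B C D E : finType.
Variable F : A -> B -> C -> D -> E -> R.

Lemma sum5_reorder_cedba :
  \sum_a \sum_b \sum_c \sum_d \sum_e F a b c d e =
  \sum_c \sum_e \sum_d \sum_b \sum_a F a b c d e.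
Proof.
transitivity (\sum_a \sum_c \sum_b \sum_d \sum_e F a b c d e).
  by apply: eq_bigr => a _; exact: exchange_big.
rewrite exchange_big; apply: eq_bigr => c _.
transitivity (\sum_a \sum_b \sum_e \sum_d F a b c d e).
  by apply: eq_bigr => a _; apply: eq_bigr => b _; exact: exchange_big.
transitivity (\sum_a \sum_e \sum_b \sum_d F a b c d e).
  by apply: eq_bigr => a _; exact: exchange_big.
rewrite exchange_big; apply: eq_bigr => e _.
transitivity (\sum_a \sum_d \sum_b F a b c d e).
  by apply: eq_bigr => a _; exact: exchange_big.
by rewrite exchange_big; apply: eq_bigr => d _; exact: exchange_big.
Qed.

Lemma sum5_reorder_bdeca :
  \sum_a \sum_b \sum_c \sum_d \sum_e F a b c d e =
  \sum_b \sum_d \sum_e \sum_c \sum_a F a b c d e.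
Proof.
rewrite exchange_big; apply: eq_bigr => b _.
transitivity (\sum_a \sum_d \sum_c \sum_e F a b c d e).
  by apply: eq_bigr => a _; exact: exchange_big.
rewrite exchange_big; apply: eq_bigr => d _.
transitivity (\sum_a \sum_e \sum_c F a b c d e).
  by apply: eq_bigr => a _; exact: exchange_big.
by rewrite exchange_big; apply: eq_bigr => e _; exact: exchange_big.
Qed.

End Reorder5.

Section Pullback.
Variable k : fieldType.
Hypothesis hchar : [pchar k] =i pred0.
Variable m : nat -> nat.
Variable c : forall d d' : nat, 'I_(m d) -> 'I_(m d') -> 'I_(m (d + d')%N) -> k.
Variables d e i j : nat.
Variable g : tens k m e (i + j).
Hypothesis g_sym : sym_tensor g.
Variable beta : {mpoly k[m (e + d)]} -> {mpoly k[m (e + d)]} -> k.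

Definition star_coprod_term (b : word m d (i + j)) (S : {set 'I_(i + j)}) :=
  \sum_a g a * \sum_w star_coef c a b w * beta (mono k w S) (mono k w (~: S)).

Lemma coprod_eval_star (t : tens k m d (i + j)) :
  coprod_eval (star c g t) i beta =
  \sum_b t b * \sum_(S : {set 'I_(i + j)} | #|S| == i) star_coprod_term b S.
Proof.
pose G a b w S := g a * t b * star_coef c a b w * beta (mono k w S) (mono k w (~: S)).
transitivity (\sum_a \sum_b \sum_w \sum_(S : {set 'I_(i + j)} | #|S| == i) G a b w S).
  transitivity (\sum_w \sum_a \sum_b \sum_(S : {set 'I_(i + j)} | #|S| == i) G a b w S).
    apply: eq_bigr => w _; rewrite starE mulr_suml; apply: eq_bigr => a _.
    by rewrite mulr_suml; apply: eq_bigr => b _; rewrite mulr_sumr.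
  by rewrite exchange_big; apply: eq_bigr => a _; rewrite exchange_big.
symmetry.
transitivity (\sum_b \sum_(S : {set 'I_(i + j)} | #|S| == i) \sum_a \sum_w G a b w S).
  apply: eq_bigr => b _; rewrite mulr_sumr; apply: eq_bigr => S _.
  rewrite mulr_sumr; apply: eq_bigr => a _; rewrite !mulr_sumr; apply: eq_bigr => w _.
  by rewrite /G; ring.
rewrite [RHS]exchange_big; apply: eq_bigr => b _.
by rewrite exchange_big; apply: eq_bigr => a _; rewrite exchange_big.
Qed.

Lemma star_coprod_term_wact s b S :
  star_coprod_term (wact s b) S = star_coprod_term b (s @: S).
Proof.
rewrite /star_coprod_term (sum_wact s); apply: eq_bigr => a _.
rewrite (sym_tensor_wact g_sym); congr (_ * _); rewrite (sum_wact s).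
by apply: eq_bigr => w _; rewrite star_coef_wact !mono_wact imsetC_perm.
Qed.

Definition lblock : {set 'I_(i + j)} := scat setT set0.

Lemma card_perm_lblock (S : {set 'I_(i + j)}) :
  #|S| = i -> exists s : 'S_(i + j), S = s @: lblock.
Proof.
move=> card_S.
have card_lblock : #|lblock| = i by rewrite card_scat cardsT cards0 card_ord addn0.
have card_fibres (A : {set 'I_(i + j)}) (y : bool) :
    #|[pred x | (x \in A) == y]| = if y then #|A| else #|~: A|.
  by case: y; apply: eq_card => x; rewrite !inE; case: (x \in A).
have [s lblock_s] : exists s : 'S_(i + j), forall x, (x \in lblock) = (s x \in S).
  apply: (card_fibres_perm (f := fun x => x \in S)) => y.
  rewrite (card_fibres S) (card_fibres lblock); case: y; first by rewrite card_S.
  by have := cardsC lblock; rewrite card_lblock -(cardsC S) card_S => /addnI ->.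
exists s; apply/setP => y; rewrite -[y](permKV s) mem_imset ?lblock_s //; exact: perm_inj.
Qed.

Definition pullback_coef (u : word m d i) (v : word m d j) :=
  \sum_(a1 : word m e i) \sum_(a2 : word m e j) g (fcat a1 a2) *
    \sum_(w1 : word m (e + d) i) \sum_(w2 : word m (e + d) j)
       star_coef c a1 u w1 * star_coef c a2 v w2 * beta 'X_[wdeg w1] 'X_[wdeg w2].

Lemma star_coprod_term_fcat (u : word m d i) (v : word m d j) :
  star_coprod_term (fcat u v) lblock = pullback_coef u v.
Proof.
rewrite /star_coprod_term /pullback_coef sum_fcat; apply: eq_bigr => a1 _.
apply: eq_bigr => a2 _; congr (_ * _).
rewrite sum_fcat; apply: eq_bigr => w1 _; apply: eq_bigr => w2 _.
rewrite star_coef_fcat /lblock setC_scat setCT setC0 !mono_fcat !mono_set0 !mono_setT.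
by rewrite mulr1 mul1r.
Qed.

Lemma g_fcat_wact (s1 : 'S_i) (s2 : 'S_j) (a1 : word m e i) (a2 : word m e j) :
  g (fcat (wact s1 a1) (wact s2 a2)) = g (fcat a1 a2).
Proof.
have : wdeg (fcat a1 a2 : word m e (i + j)) =
       wdeg (fcat (wact s1 a1) (wact s2 a2) : word m e (i + j)).
  by rewrite !wdeg_fcat !wdeg_wact.
by case/wdeg_eqP => s ->; rewrite (sym_tensor_wact g_sym).
Qed.

Lemma pullback_coef_wact (s1 : 'S_i) (s2 : 'S_j) u v :
  pullback_coef (wact s1 u) (wact s2 v) = pullback_coef u v.
Proof.
rewrite /pullback_coef (sum_wact s1); apply: eq_bigr => a1 _.
rewrite (sum_wact s2); apply: eq_bigr => a2 _; rewrite g_fcat_wact; congr (_ * _).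
rewrite (sum_wact s1); apply: eq_bigr => w1 _; rewrite (sum_wact s2); apply: eq_bigr => w2 _.
by rewrite !wdeg_wact !star_coef_wact.
Qed.

Lemma pullback_coef_wdegl u u' v : wdeg u = wdeg u' -> pullback_coef u v = pullback_coef u' v.
Proof.
by case/wdeg_eqP => s ->; rewrite -[in RHS](wact1 v) pullback_coef_wact.
Qed.

Lemma pullback_coef_wdegr u v v' : wdeg v = wdeg v' -> pullback_coef u v = pullback_coef u v'.
Proof.
by case/wdeg_eqP => s ->; rewrite -[in RHS](wact1 u) pullback_coef_wact.
Qed.

(* [pullback_form x y] pairs [beta] with the (i, j)-component of the coproduct
   of [g * (x (x) y)], the factors [x] and [y] being lifted symmetrically. *)
Definition pullback_form (x y : {mpoly k[m d]}) :=
  \sum_(u : word m d i) \sum_(v : word m d j)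
    sym_lift i x u * sym_lift j y v * pullback_coef u v.

Lemma pullback_form_bilinear : bilinear_form pullback_form.
Proof.
split=> a x x' y; rewrite /pullback_form mulr_sumr -big_split; apply: eq_bigr => u _;
  rewrite mulr_sumr -big_split; apply: eq_bigr => v _; rewrite sym_liftD /=; ring.
Qed.

Lemma pullback_formX (u : word m d i) (v : word m d j) :
  pullback_form 'X_[wdeg u] 'X_[wdeg v] = pullback_coef u v.
Proof.
transitivity (\sum_u' sym_lift i 'X_[wdeg u] u' * pullback_coef u' v).
  apply: eq_bigr => u' _; rewrite -(sum_sym_liftX hchar (P := pullback_coef u') v).
    by rewrite mulr_sumr; apply: eq_bigr => v' _; rewrite mulrA.
  by move=> ? ?; apply: pullback_coef_wdegr.
by apply: sum_sym_liftX => // ? ?; apply: pullback_coef_wdegl.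
Qed.

Lemma star_coprod_term_pullback b (S : {set 'I_(i + j)}) : #|S| = i ->
  star_coprod_term b S = pullback_form (mono k b S) (mono k b (~: S)).
Proof.
case/card_perm_lblock => s ->; rewrite -star_coprod_term_wact imsetC_perm -!mono_wact.
rewrite -(fcatK (wact s b)) star_coprod_term_fcat /lblock setC_scat setCT setC0.
by rewrite !mono_fcat !mono_set0 !mono_setT mulr1 mul1r pullback_formX.
Qed.

Lemma coprod_eval_star_pullback (t : tens k m d (i + j)) :
  coprod_eval (star c g t) i beta = coprod_eval t i pullback_form.
Proof.
rewrite coprod_eval_star /coprod_eval; apply: eq_bigr => b _; congr (_ * _).
by apply: eq_bigr => S /eqP card_S; apply: star_coprod_term_pullback.
Qed.

Definition gsliceL (a2 : word m e j) : tens k m e i := [ffun a1 => g (fcat a1 a2)].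
Definition gsliceR (a1 : word m e i) : tens k m e j := [ffun a2 => g (fcat a1 a2)].

Lemma gsliceL_sym a2 : sym_tensor (gsliceL a2).
Proof.
by move=> s; apply/ffunP => a1; rewrite tactE !ffunE -[in LHS](wact1 a2) g_fcat_wact.
Qed.

Lemma gsliceR_sym a1 : sym_tensor (gsliceR a1).
Proof.
by move=> s; apply/ffunP => a2; rewrite tactE !ffunE -[in LHS](wact1 a1) g_fcat_wact.
Qed.

Hypothesis beta_bil : bilinear_form beta.

Lemma sum_sym_lift_pullback_coefl x v :
  \sum_u sym_lift i x u * pullback_coef u v =
  \sum_a2 \sum_w2 star_coef c a2 v w2 *
    beta (toSym (star c (gsliceL a2) (sym_lift i x))) 'X_[wdeg w2].
Proof.
transitivity (\sum_(u : word m d i) \sum_(a1 : word m e i) \sum_(a2 : word m e j)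
   \sum_(w1 : word m (e + d) i) \sum_(w2 : word m (e + d) j)
   sym_lift i x u * g (fcat a1 a2) * star_coef c a1 u w1 * star_coef c a2 v w2 *
   beta 'X_[wdeg w1] 'X_[wdeg w2]).
  apply: eq_bigr => u _; rewrite /pullback_coef mulr_sumr; apply: eq_bigr => a1 _.
  rewrite mulr_sumr; apply: eq_bigr => a2 _; rewrite !mulr_sumr; apply: eq_bigr => w1 _.
  by rewrite !mulr_sumr; apply: eq_bigr => w2 _; ring.
rewrite sum5_reorder_cedba; apply: eq_bigr => a2 _; apply: eq_bigr => w2 _.
rewrite toSymE bilinear_form_suml // mulr_sumr; apply: eq_bigr => w1 _.
rewrite starE mulr_suml mulr_sumr; apply: eq_bigr => a1 _.
by rewrite mulr_suml mulr_sumr; apply: eq_bigr => u _; rewrite !ffunE; ring.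
Qed.

Lemma sum_sym_lift_pullback_coefr y u :
  \sum_v sym_lift j y v * pullback_coef u v =
  \sum_a1 \sum_w1 star_coef c a1 u w1 *
    beta 'X_[wdeg w1] (toSym (star c (gsliceR a1) (sym_lift j y))).
Proof.
transitivity (\sum_(v : word m d j) \sum_(a1 : word m e i) \sum_(a2 : word m e j)
   \sum_(w1 : word m (e + d) i) \sum_(w2 : word m (e + d) j)
   sym_lift j y v * g (fcat a1 a2) * star_coef c a1 u w1 * star_coef c a2 v w2 *
   beta 'X_[wdeg w1] 'X_[wdeg w2]).
  apply: eq_bigr => v _; rewrite /pullback_coef mulr_sumr; apply: eq_bigr => a1 _.
  rewrite mulr_sumr; apply: eq_bigr => a2 _; rewrite !mulr_sumr; apply: eq_bigr => w1 _.
  by rewrite !mulr_sumr; apply: eq_bigr => w2 _; ring.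
rewrite sum5_reorder_bdeca; apply: eq_bigr => a1 _; apply: eq_bigr => w1 _.
rewrite toSymE bilinear_form_sumr // mulr_sumr; apply: eq_bigr => w2 _.
rewrite starE mulr_suml mulr_sumr; apply: eq_bigr => a2 _.
by rewrite mulr_suml mulr_sumr; apply: eq_bigr => v _; rewrite !ffunE; ring.
Qed.

Lemma pullback_form_vanishl (I : bset k m) : is_diideal c I ->
  (forall p q, I (e + d)%N i p -> beta p q = 0) ->
  forall x y, I d i x -> pullback_form x y = 0.
Proof.
move=> I_di beta_I x y x_in; rewrite /pullback_form exchange_big big1 // => v _.
transitivity (sym_lift j y v * \sum_u sym_lift i x u * pullback_coef u v).
  by rewrite mulr_sumr; apply: eq_bigr => u _; ring.
rewrite sum_sym_lift_pullback_coefl big1 ?mulr0 // => a2 _; rewrite big1 // => w2 _.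
by rewrite beta_I ?mulr0 //; apply: (diideal_toSym_star hchar I_di x_in (gsliceL_sym a2)).
Qed.

Lemma pullback_form_vanishr (J : bset k m) : is_diideal c J ->
  (forall p q, J (e + d)%N j q -> beta p q = 0) ->
  forall x y, J d j y -> pullback_form x y = 0.
Proof.
move=> J_di beta_J x y y_in; rewrite /pullback_form big1 // => u _.
transitivity (sym_lift i x u * \sum_v sym_lift j y v * pullback_coef u v).
  by rewrite mulr_sumr; apply: eq_bigr => v _; ring.
rewrite sum_sym_lift_pullback_coefr big1 ?mulr0 // => a1 _; rewrite big1 // => w1 _.
by rewrite beta_J ?mulr0 //; apply: (diideal_toSym_star hchar J_di y_in (gsliceR_sym a1)).
Qed.

End Pullback.

Lemma join_star (k : fieldType) (hchar : [pchar k] =i pred0) (m : nat -> nat)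
    (c : forall d d' : nat, 'I_(m d) -> 'I_(m d') -> 'I_(m (d + d')%N) -> k)
    (I J : bset k m) d e n (f : tens k m d n) (g : tens k m e n) :
  is_diideal c I -> is_diideal c J ->
  SImage (join I J) f -> sym_tensor g -> SImage (join I J) (star c g f).
Proof.
move=> I_di J_di [F [F_join [t [toSym_t symz_t]]]] g_sym.
exists (toSym (star c g t)); split; last first.
  by exists (star c g t); split; rewrite // symz_star // symz_t.
split=> [|t' toSym_t' i le_i_n beta beta_bil beta_I beta_J]; first exact: toSym_homog.
rewrite (coprod_eval_toSym hchar i beta toSym_t').
move: beta_J; have := subnKC le_i_n; move: (n - i)%N => j def_n beta_J; subst n.
rewrite (coprod_eval_star_pullback hchar c g_sym).
apply: (F_join.2 t toSym_t i (leq_addr _ _)); first exact: pullback_form_bilinear.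
- exact: (pullback_form_vanishl hchar g_sym beta_bil I_di beta_I).
- by rewrite addKn; apply: (pullback_form_vanishr hchar g_sym beta_bil J_di beta_J).
Qed.

(* Everything happens in the coordinates [m], [c] of [B] used by the
   definitions. *)
Theorem proposition4p2
  (k : fieldType) (hchar : [pchar k] =i pred0)
  (A : comAlgType k) (m : nat -> nat) (e : forall d : nat, 'I_(m d) -> A)
  (c : forall d d' : nat, 'I_(m d) -> 'I_(m d') -> 'I_(m (d + d')%N) -> k)
  (* A = (+)_d B_d, B_d with basis (e d i)_i *)
  (hdirect : forall (N : nat) (a : forall d : nat, 'I_(m d) -> k),
      \sum_(d < N) \sum_(i : 'I_(m d)) a d i *: e d i = 0 ->
      forall (d : 'I_N) (i : 'I_(m d)), a d i = 0)
  (hspan : forall x : A, exists (N : nat) (a : forall d : nat, 'I_(m d) -> k),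
      x = \sum_(d < N) \sum_(i : 'I_(m d)) a d i *: e d i)
  (* graded multiplication, with structure constants c *)
  (hmul : forall d d' (i : 'I_(m d)) (j : 'I_(m d')),
      e d i * e d' j = \sum_(l : 'I_(m (d + d')%N)) c d d' i j l *: e (d + d')%N l)
  (* B_0 = k *)
  (hB0 : (forall i : 'I_(m 0%N), exists a : k, e 0%N i = a%:A) /\
         (exists a : 'I_(m 0%N) -> k, \sum_(i : 'I_(m 0%N)) a i *: e 0%N i = 1))
  (* B generated by B_1 *)
  (hgen : forall d (l : 'I_(m d.+1)), exists a : 'I_(m 1%N) -> 'I_(m d) -> k,
      e d.+1 l = \sum_(i : 'I_(m 1%N)) \sum_(j : 'I_(m d)) a i j *: (e 1%N i * e d j))
  (I J : bset k m) :
  is_diideal c I -> is_diideal c J -> is_diideal c (join I J).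
Proof.
move=> I_di J_di; split; first exact: join_is_ideal I_di.1 J_di.1.
by move=> d d' n f g; apply: join_star.
Qed.
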